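(* Let $k$ be a field and let $A$ be a just infinite $k$-algebra whose Jacobson radical $J(A)$ is nonzero. Then $A$ has only finitely many prime ideals.
   Context: All rings are associative unital algebras over a field. A $k$-algebra $A$ is called just infinite if $\dim_k(A)=\infty$ and every nonzero two-sided ideal of $A$ has finite codimension in $A$. *)

From HB Require Import structures.
From mathcomp Require Import all_boot all_algebra.
Set Implicit Arguments. Unset Strict Implicit. Unset Printing Implicit Defensive.
Import GRing.Theory.
Local Open Scope ring_scope.

Section Defs.
Variables (k : fieldType) (A : algType k).

Definition additive_subgroup (I : A -> Prop) : Prop :=
  I 0 /\ (forall x y, I x -> I y -> I (x - y)).

Definition left_ideal (I : A -> Prop) : Prop :=
  additive_subgroup I /\ (forall a x, I x -> I (a * x)).

Definition ideal (I : A -> Prop) : Prop :=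
  additive_subgroup I /\ (forall a x, I x -> I (a * x)) /\
  (forall a x, I x -> I (x * a)).

Definition proper (I : A -> Prop) : Prop := exists x, ~ I x.

Definition nonzero_set (I : A -> Prop) : Prop := exists2 x, I x & x != 0.

(* [I] has finite codimension: A/I is spanned over k by finitely many
   classes, i.e. A = I + span_k s for some finite sequence s. *)
Definition finite_codim (I : A -> Prop) : Prop :=
  exists s : seq A, forall a : A,
    exists c : seq k, I (a - \sum_(i < size s) c`_i *: s`_i).

Definition finite_dim : Prop :=
  exists s : seq A, forall a : A,
    exists c : seq k, a = \sum_(i < size s) c`_i *: s`_i.

Definition just_infinite : Prop :=
  ~ finite_dim /\
  (forall I, ideal I -> nonzero_set I -> finite_codim I).

Definition maximal_left_ideal (L : A -> Prop) : Prop :=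
  left_ideal L /\ proper L /\
  (forall L', left_ideal L' -> proper L' -> (forall x, L x -> L' x) ->
     forall x, L' x -> L x).

Definition jacobson_radical : A -> Prop :=
  fun x => forall L, maximal_left_ideal L -> L x.

Definition prime_ideal (P : A -> Prop) : Prop :=
  ideal P /\ proper P /\
  (forall I J, ideal I -> ideal J ->
     (forall x y, I x -> J y -> P (x * y)) ->
     (forall x, I x -> P x) \/ (forall y, J y -> P y)).

End Defs.

From mathcomp Require Import all_boot all_algebra.
From Stdlib Require Import Classical ClassicalEpsilon.
Set Implicit Arguments. Unset Strict Implicit. Unset Printing Implicit Defensive.
Import GRing.Theory.
Local Open Scope ring_scope.

(* A nonzero prime P has finite codimension, so there is a left ideal M
   minimal over P.  For m in M \ P the left annihilator of m modulo P is a
   maximal left ideal, hence J(A) M ⊆ P, and primeness gives J(A) ⊆ P.  The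
   intersection I of all nonzero primes thus contains J(A) <> 0 and has finite
   codimension.  Subspaces containing I are measured by a dimension, and an
   induction on it shows that only finitely many primes contain I; the zero
   ideal is the only other candidate. *)

Local Notation "I ⊆ J" := (forall x, I x -> J x) (at level 70, no associativity).

Lemma ex_argmin (T : Type) (C : T -> Prop) (f : T -> nat) :
  (exists x, C x) -> exists2 x, C x & forall y, C y -> (f x <= f y)%N.
Proof.
move=> [x0 Cx0]; apply: NNPP => nomin.
suff lb n : forall x, C x -> (n <= f x)%N.
  by have := lb (f x0).+1 x0 Cx0; rewrite ltnn.
elim: n => [|n IH] x Cx //; apply: NNPP => /negP; rewrite -ltnNge ltnS => fx_le.
by apply: nomin; exists x => // y Cy; apply: leq_trans fx_le (IH y Cy).
Qed.

Lemma ex_argmax (T : Type) (C : T -> Prop) (f : T -> nat) (N : nat) :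
  (exists x, C x) -> (forall x, C x -> (f x <= N)%N) ->
  exists2 x, C x & forall y, C y -> (f y <= f x)%N.
Proof.
move=> exC f_le; have [x Cx xmin] := ex_argmin (fun x => N - f x)%N exC.
by exists x => // y Cy; rewrite -(leq_sub2lE (f x) (f_le y Cy)) xmin.
Qed.

Section LinClosed.
Variables (k : fieldType) (V : lmodType k).

Definition lin_closed (L : V -> Prop) : Prop :=
  L 0 /\ forall a u v, L u -> L v -> L (a *: u + v).

Lemma lin_closedD L u v : lin_closed L -> L u -> L v -> L (u + v).
Proof. by move=> [_ LC] Lu Lv; rewrite -[u]scale1r; apply: LC. Qed.

Lemma lin_closedB L u v : lin_closed L -> L u -> L v -> L (u - v).
Proof. by move=> [_ LC] Lu Lv; rewrite addrC -scaleN1r; apply: LC. Qed.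

End LinClosed.

Section VspaceOf.
Variables (k : fieldType) (vT : vectType k).

Lemma vspace_of_ex (Q : vT -> Prop) : lin_closed Q ->
  exists U : {vspace vT}, forall v, v \in U <-> Q v.
Proof.
move=> Qlin; pose C (U : {vspace vT}) := forall v, v \in U -> Q v.
have C0 : C 0%VS by move=> v; rewrite memv0 => /eqP ->; case: Qlin.
have [U CU Umax] := ex_argmax (f := fun U => \dim U) (ex_intro C _ C0)
  (fun U _ => dimvS (subvf U)).
exists U => v; split=> [/CU // | Qv]; apply/negPn/negP => vNU.
have CUv : C (U + <[v]>)%VS.
  move=> w /memv_addP [u Uu [z /vlineP [a ->] ->]].
  by rewrite addrC; apply: Qlin.2 => //; apply: CU.
have sUUv : (U <= U + <[v]>)%VS := addvSl U <[v]>.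
move: (Umax _ CUv); rewrite (geq_leqif (dimv_leqif_sup sUUv)) => sUvU.
by apply: (negP vNU); rewrite memvE; apply: subv_trans (addvSr U _) sUvU.
Qed.

Definition vspace_of (Q : vT -> Prop) : {vspace vT} :=
  epsilon (inhabits 0%VS) (fun U => forall v, v \in U <-> Q v).

Lemma vspace_ofP Q : lin_closed Q -> forall v, v \in vspace_of Q <-> Q v.
Proof. by move=> Qlin; apply: epsilon_spec (vspace_of_ex Qlin). Qed.

End VspaceOf.

Section LincombDim.
Variables (k : fieldType) (V : lmodType k) (s : seq V).

Definition lincomb (v : 'rV[k]_(size s)) : V := \sum_(i < size s) v 0 i *: s`_i.

Lemma lincombD a u v : lincomb (a *: u + v) = a *: lincomb u + lincomb v.
Proof.
rewrite /lincomb scaler_sumr -big_split /=; apply: eq_bigr => i _.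
by rewrite !mxE scalerDl scalerA.
Qed.

Lemma lincomb0 : lincomb 0 = 0.
Proof. by rewrite /lincomb big1 // => i _; rewrite mxE scale0r. Qed.

Definition lincomb_preim (L : V -> Prop) : {vspace 'rV[k]_(size s)} :=
  vspace_of (fun v => L (lincomb v)).

Definition lincomb_dim (L : V -> Prop) : nat := \dim (lincomb_preim L).

Lemma lincomb_preimP L : lin_closed L ->
  forall v, v \in lincomb_preim L <-> L (lincomb v).
Proof.
move=> [L0 LC]; apply: vspace_ofP; split; first by rewrite lincomb0.
by move=> a u v Lu Lv; rewrite lincombD; apply: LC.
Qed.

Lemma lincomb_dim_max L : (lincomb_dim L <= \dim {:'rV[k]_(size s)})%N.
Proof. exact: dimvS (subvf _). Qed.

Variable I0 : V -> Prop.
Hypothesis I0_complement :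
  forall a, exists c : seq k, I0 (a - \sum_(i < size s) c`_i *: s`_i).

(* Since V = I0 + span s, a subspace containing I0 is determined by its
   preimage under lincomb. *)
Lemma lincomb_dim_sub L1 L2 : lin_closed L1 -> lin_closed L2 ->
  I0 ⊆ L1 -> L1 ⊆ L2 -> (lincomb_dim L2 <= lincomb_dim L1)%N -> L2 ⊆ L1.
Proof.
move=> L1lin L2lin I0L1 L1L2 dim_le x L2x.
have sub12 : (lincomb_preim L1 <= lincomb_preim L2)%VS.
  by apply/subvP => v; rewrite (lincomb_preimP L1lin) (lincomb_preimP L2lin); apply: L1L2.
move: dim_le; rewrite (geq_leqif (dimv_leqif_sup sub12)) => /subvP sub21.
have [c I0xc] := I0_complement x; pose w := \row_(i < size s) c`_i.
have L1x : L1 (x - lincomb w).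
  by apply: I0L1; rewrite /lincomb; under eq_bigr do rewrite mxE.
have L2w : L2 (lincomb w).
  have -> : lincomb w = x - (x - lincomb w) by rewrite opprB addrC subrK.
  by apply: lin_closedB L2x (L1L2 _ L1x).
move/lincomb_preimP: L2w => /(_ L2lin) /sub21 /(lincomb_preimP L1lin) L1w.
by rewrite -(subrK (lincomb w) x); apply: lin_closedD.
Qed.

End LincombDim.

Section Ideals.
Variables (k : fieldType) (A : algType k).
Implicit Types (I J L M P : A -> Prop).

Lemma ideal_left I : ideal I -> left_ideal I.
Proof. by case=> [? [? _]]. Qed.

Lemma left_ideal_lin_closed L : left_ideal L -> lin_closed L.
Proof.
move=> [[L0 LB] LM]; split=> // a u v Lu Lv.
have Lau : L (a *: u) by rewrite -[u]mul1r scalerAl; apply: LM.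
by have := LB _ _ Lau (LB _ _ L0 Lv); rewrite sub0r opprK.
Qed.

Lemma ideal_lin_closed I : ideal I -> lin_closed I.
Proof. by move/ideal_left/left_ideal_lin_closed. Qed.

Lemma ideal_meet I J : ideal I -> ideal J -> ideal (fun x => I x /\ J x).
Proof.
move=> [[I0 IB] [IMl IMr]] [[J0 JB] [JMl JMr]].
split; first split=> // [x y [Ix Jx] [Iy Jy]]; first by split; [apply: IB | apply: JB].
by split=> a x [Ix Jx]; split; [apply: IMl | apply: JMl | apply: IMr | apply: JMr].
Qed.

Lemma ideal_bigcap (F : (A -> Prop) -> Prop) :
  (forall I, F I -> ideal I) -> ideal (fun x => forall I, F I -> I x).
Proof.
move=> Fid; split; first split.
- by move=> I /Fid [[]].
- by move=> x y Fx Fy I FI; case: (Fid I FI) => [[_ IB] _]; apply: IB; [apply: Fx | apply: Fy].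
split=> a x Fx I FI; case: (Fid I FI) => [_ [IMl IMr]]; [apply: IMl | apply: IMr]; exact: Fx.
Qed.

Lemma prime_meet_sub P I J : prime_ideal P -> ideal I -> ideal J ->
  (fun x => I x /\ J x) ⊆ P -> I ⊆ P \/ J ⊆ P.
Proof.
move=> [_ [_ Pprime]] Iid Jid IJP; apply: Pprime => // x y Ix Jy.
by apply: IJP; split; [apply: Iid.2.2 | apply: Jid.2.1].
Qed.

Lemma prime_mul_left_ideal P M x : prime_ideal P -> left_ideal M -> ~ M ⊆ P ->
  (forall m, M m -> P (x * m)) -> P x.
Proof.
move=> [[[P0 PB] [PMl PMr]] [_ Pprime]] [_ MM] MnP xMP.
pose I y := forall m, M m -> P (y * m).
pose J z := forall y, I y -> P (y * z).
have Iid : ideal I.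
  split; first split.
  - by move=> m _; rewrite mul0r.
  - by move=> y z Iy Iz m Mm; rewrite mulrBl; apply: PB; [apply: Iy | apply: Iz].
  split=> a y Iy m Mm; first by rewrite -mulrA; apply: PMl; apply: Iy.
  by rewrite -mulrA; apply: Iy; apply: MM.
have Jid : ideal J.
  split; first split.
  - by move=> y _; rewrite mulr0.
  - by move=> z t Jz Jt y Iy; rewrite mulrBr; apply: PB; [apply: Jz | apply: Jt].
  split=> a z Jz y Iy; rewrite mulrA; last by apply: PMr; apply: Jz.
  by apply: Jz; apply: Iid.2.2.
case: (Pprime I J Iid Jid (fun y z Iy Jz => Jz y Iy)) => [IP | JP]; first exact: IP.
by case: MnP => m Mm; apply: JP => y; apply.
Qed.

Definition minimal_over P M : Prop :=
  [/\ left_ideal M, P ⊆ M, ~ M ⊆ P &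
      forall N, left_ideal N -> P ⊆ N -> N ⊆ M -> ~ N ⊆ P -> M ⊆ N].

Lemma left_ideal_cyclic_add P y : left_ideal P ->
  left_ideal (fun x => exists c p, P p /\ x = c * y + p).
Proof.
move=> [[P0 PB] PM]; split; first split.
- by exists 0, 0; rewrite mul0r addr0.
- move=> _ _ [c1 [p1 [Pp1 ->]]] [c2 [p2 [Pp2 ->]]].
  exists (c1 - c2), (p1 - p2); split; first exact: PB.
  by rewrite mulrBl opprD addrACA.
- move=> a _ [c [p [Pp ->]]]; exists (a * c), (a * p); split; first exact: PM.
  by rewrite mulrDr mulrA.
Qed.

Lemma annihilator_maximal P M m : left_ideal P -> minimal_over P M ->
  M m -> ~ P m -> maximal_left_ideal (fun a => P (a * m)).
Proof.
move=> Pleft [Mleft PM _ Mmin] Mm PnM; have [[P0 PB] PMl] := Pleft.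
split; first split; first split.
- by rewrite mul0r.
- by move=> a b Pa Pb; rewrite mulrBl; apply: PB.
- by move=> a b Pb; rewrite -mulrA; apply: PMl.
split; first by exists 1; rewrite mul1r.
move=> L' L'left [z L'nz] annL' b L'b; apply: NNPP => PnbM.
pose N x := exists c p, P p /\ x = c * (b * m) + p.
have Nleft : left_ideal N := left_ideal_cyclic_add (b * m) Pleft.
have PN : P ⊆ N by move=> x Px; exists 0, x; rewrite mul0r add0r.
have NM : N ⊆ M.
  move=> _ [c [p [Pp ->]]]; have MM := Mleft.2.
  exact: lin_closedD (left_ideal_lin_closed Mleft) (MM _ _ (MM _ _ Mm)) (PM _ Pp).
have NnP : ~ N ⊆ P by move=> NP; apply: PnbM; apply: NP; exists 1, 0; rewrite mul1r addr0.
have [c [p [Pp m_eq]]] := Mmin N Nleft PN NM NnP m Mm.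
have L'1cb : L' (1 - c * b).
  by apply: annL'; rewrite mulrBl mul1r -mulrA {1}m_eq addrC addKr.
have L'1 : L' 1.
  rewrite -(subrK (c * b) 1).
  exact: lin_closedD (left_ideal_lin_closed L'left) L'1cb (L'left.2 _ _ L'b).
by apply: L'nz; rewrite -[z]mulr1; apply: L'left.2.
Qed.

End Ideals.

Section Jacobson.
Variables (k : fieldType) (A : algType k).
Implicit Types (P M : A -> Prop).

Lemma jacobson_mul_minimal P M j : left_ideal P -> minimal_over P M ->
  jacobson_radical j -> forall m, M m -> P (j * m).
Proof.
move=> Pleft Mmin Jj m Mm; case: (classic (P m)) => [Pm | PnM].
  exact: Pleft.2.
exact: Jj _ (annihilator_maximal Pleft Mmin Mm PnM).
Qed.

Lemma exists_minimal_over P : left_ideal P -> proper P -> finite_codim P ->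
  exists M, minimal_over P M.
Proof.
move=> Pleft [z PnZ] [s Pcompl].
pose C M := [/\ left_ideal M, P ⊆ M & ~ M ⊆ P].
have CT : C (fun _ => True).
  split=> [|//|TP]; first by do 2?split.
  exact: PnZ (TP z I).
have [M [Mleft PM MnP] Mmin] := ex_argmin (lincomb_dim s) (ex_intro C _ CT).
exists M; split=> // N Nleft PN NM NnP.
exact (lincomb_dim_sub Pcompl (left_ideal_lin_closed Nleft)
  (left_ideal_lin_closed Mleft) PN NM (Mmin N (And3 Nleft PN NnP))).
Qed.

Lemma prime_finite_codim_jacobson P j : prime_ideal P -> finite_codim P ->
  jacobson_radical j -> P j.
Proof.
move=> Pprime Pcodim Jj; have Pleft := ideal_left Pprime.1.
have [M Mmin] := exists_minimal_over Pleft Pprime.2.1 Pcodim.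
have [Mleft _ MnP _] := Mmin.
exact: prime_mul_left_ideal Pprime Mleft MnP (jacobson_mul_minimal Pleft Mmin Jj).
Qed.

End Jacobson.

Section PrimesOverFiniteCodim.
Variables (k : fieldType) (A : algType k).
Implicit Types (P Q : A -> Prop) (l : seq (A -> Prop)).

Definition listed l P : Prop :=
  exists2 i, (i < size l)%N & forall x, P x <-> nth (fun _ => False) l i x.

Variables (I0 : A -> Prop) (s : seq A).
Hypothesis I0_complement :
  forall a, exists c : seq k, I0 (a - \sum_(i < size s) c`_i *: s`_i).

(* By induction on lincomb_dim Q: if P has the largest dimension among the
   primes over I0 not containing Q, every other such prime does not contain
   Q ∩ P either, and Q ∩ P has smaller dimension. *)
Lemma primes_not_above_listed Q : ideal Q -> I0 ⊆ Q ->
  exists l, forall P, prime_ideal P -> I0 ⊆ P -> ~ Q ⊆ P -> listed l P.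
Proof.
have [n] := ubnP (lincomb_dim s Q); elim: n Q => // n IH Q dimQ Qid I0Q.
pose C P := [/\ prime_ideal P, I0 ⊆ P & ~ Q ⊆ P].
case: (classic (exists P, C P)) => [exC | noC]; last first.
  by exists [::] => P Pprime I0P QnP; case: noC; exists P.
have [P [Pprime I0P QnP] Pmax] :=
  ex_argmax (f := lincomb_dim s) exC (fun P _ => lincomb_dim_max s P).
have Pid := Pprime.1.
pose Q' x := Q x /\ P x.
have Q'id : ideal Q' := ideal_meet Qid Pid.
have I0Q' : I0 ⊆ Q' by move=> x I0x; split; [apply: I0Q | apply: I0P].
have dimQ' : (lincomb_dim s Q' < n)%N.
  rewrite ltnS in dimQ; apply: leq_trans dimQ; rewrite ltnNge; apply/negP => dim_le.
  apply: QnP => x Qx.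
  by case: (lincomb_dim_sub I0_complement (ideal_lin_closed Q'id)
    (ideal_lin_closed Qid) I0Q' (fun y Q'y => Q'y.1) dim_le Qx).
have [l listed_l] := IH Q' dimQ' Q'id I0Q'.
exists (P :: l) => P' P'prime I0P' QnP'.
case: (classic (Q' ⊆ P')) => [Q'P' | Q'nP']; last first.
  by have [i il P'i] := listed_l P' P'prime I0P' Q'nP'; exists i.+1.
have PP' : P ⊆ P'.
  by case: (prime_meet_sub P'prime Qid Pid Q'P') => // QP'; case: QnP'.
have P'P : P' ⊆ P.
  apply: (lincomb_dim_sub I0_complement (ideal_lin_closed Pid)
    (ideal_lin_closed P'prime.1) I0P PP').
  by apply: Pmax; split=> // QP; apply: QnP'; move=> x /QP /PP'.
by exists 0%N => // x; split; [apply: P'P | apply: PP'].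
Qed.

Lemma primes_above_listed :
  exists l, forall P, prime_ideal P -> I0 ⊆ P -> listed l P.
Proof.
have [|//|l listed_l] := @primes_not_above_listed (fun _ => True).
  by do 2?split.
exists l => P Pprime I0P; apply: listed_l => // TP.
by have [_ [[z PnZ] _]] := Pprime; apply: PnZ; apply: TP.
Qed.

End PrimesOverFiniteCodim.

Theorem proposition2p1 (k : fieldType) (A : algType k) :
  just_infinite A -> nonzero_set (jacobson_radical (A:=A)) ->
  exists s : seq (A -> Prop),
    forall P, prime_ideal P -> exists2 i, (i < size s)%N & (forall x, P x <-> nth (fun _ => False) s i x).
Proof.
move=> [_ ideal_codim] [j Jj j_neq0].
pose I0 (x : A) := forall P, prime_ideal P /\ nonzero_set P -> P x.
have I0_ideal : ideal I0 by apply: ideal_bigcap => P [[]].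
have I0j : I0 j.
  move=> P [Pprime Pnz].
  exact: prime_finite_codim_jacobson Pprime (ideal_codim _ Pprime.1 Pnz) Jj.
have [s I0_complement] := ideal_codim I0 I0_ideal (ex_intro2 _ _ j I0j j_neq0).
have [l listed_l] := primes_above_listed I0_complement.
exists ((fun x => x = 0) :: l) => P Pprime.
case: (classic (nonzero_set P)) => [Pnz | Pz].
  have [i il Pi] := listed_l P Pprime (fun x I0x => I0x P (conj Pprime Pnz)).
  by exists i.+1.
exists 0%N => // x; split=> [Px | ->]; last by case: Pprime => [[[]]].
by apply: NNPP => /eqP x_neq0; apply: Pz; exists x.
Qed.
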